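(* Let $V$ be a real vector space with a non-degenerate symmetric inner product of signature $(p,q)$ with $p\ge2$ and $q\ge2$. Then there exists a covariant derivative algebraic curvature tensor $\nabla R$ on $V$ such that $\mathcal{S}_{\nabla R}(v)^2=0$ for all $v\in V$ and such that $\mathcal{S}_{\nabla R}$ does not vanish identically.
   Context: A covariant derivative algebraic curvature tensor is $\nabla R\in\otimes^5V^*$ satisfying $\nabla R(a,b,c,d;e)=-\nabla R(b,a,c,d;e)=\nabla R(c,d,a,b;e)$, $\nabla R(a,b,c,d;e)+\nabla R(a,c,d,b;e)+\nabla R(a,d,b,c;e)=0$, and $\nabla R(a,b,c,d;e)+\nabla R(a,b,d,e;c)+\nabla R(a,b,e,c;d)=0$. The Szab\'o operator $\mathcal{S}_{\nabla R}(x)$ is the linear map of $V$ defined by $(\mathcal{S}_{\nabla R}(x)y,w)=\nabla R(y,x,x,w;x)$. *)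

From mathcomp Require Import all_boot all_order all_algebra.
From mathcomp Require Import reals.
Set Implicit Arguments. Unset Strict Implicit. Unset Printing Implicit Defensive.
Import Order.TTheory GRing.Theory Num.Theory.
Local Open Scope ring_scope.

(* An element of (x)^5 V^* is given by its
   components T i j k l m in the standard basis; it acts multilinearly. *)

Definition tensor5 (R : realType) (n : nat) :=
  'I_n -> 'I_n -> 'I_n -> 'I_n -> 'I_n -> R.

Definition tev (R : realType) (n : nat) (T : tensor5 R n)
  (a b c d e : 'rV[R]_n) : R :=
  \sum_(i < n) \sum_(j < n) \sum_(k < n) \sum_(l < n) \sum_(m < n)
     T i j k l m * a 0 i * b 0 j * c 0 k * d 0 l * e 0 m.

Definition is_cdact (R : realType) (n : nat) (T : tensor5 R n) : Prop :=
  forall a b c d e : 'rV[R]_n,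
    [/\ tev T a b c d e = - tev T b a c d e,
        tev T a b c d e = tev T c d a b e,
        tev T a b c d e + tev T a c d b e + tev T a d b c e = 0
      & tev T a b c d e + tev T a b d e c + tev T a b e c d = 0].

Definition ip (R : realType) (n : nat) (G : 'M[R]_n) (u w : 'rV[R]_n) : R :=
  (u *m G *m w^T) 0 0.

(* Szabo operator S(x), as a matrix acting on row vectors (y |-> y *m S):
   the unique linear map with ip G (y *m S) w = tev T y x x w x
   (G invertible). *)
Definition szabo (R : realType) (n : nat) (G : 'M[R]_n) (T : tensor5 R n)
  (x : 'rV[R]_n) : 'M[R]_n :=
  (\matrix_(i < n, j < n) tev T (delta_mx 0 i) x x (delta_mx 0 j) x) *m invmx G.

Definition has_signature (R : realType) (p q : nat) (G : 'M[R]_(p + q)) : Prop :=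
  exists P : 'M[R]_(p + q), P \in unitmx /\
    P *m G *m P^T = diag_mx (\row_(i < p + q) (if (i < p)%N then 1 else -1 : R)).
Arguments has_signature {R} p q G.

From mathcomp Require Import all_boot all_order all_algebra.
From mathcomp Require Import reals ring zify.
Import Order.TTheory GRing.Theory Num.Theory.
Local Open Scope ring_scope.
Set Implicit Arguments. Unset Strict Implicit.

(* Relative to the dual form, a space of signature (p, q) with p, q >= 2
   contains a totally isotropic plane, spanned by covectors a, b coming from
   the hyperbolic pairs e_0 + e_p and e_1 + e_(p+1) of the Sylvester form.
   Take nabla R := w (x) w (x) b with w = a /\ b: all the required symmetries
   are polynomial identities in the values of a and b.  Its Szabo operator is
   S(x) = - b(x) c (x) c^#, where c = b(x) a - a(x) b lies in the isotropic
   plane, so S(x) has rank at most one and null image, whence S(x)^2 = 0;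
   and for a(x) = 0, b(x) = 1 one gets S(x) = - a (x) a^# <> 0. *)

Section MatrixFacts.
Variables (R : comUnitRingType) (n : nat).
Implicit Types (G P D : 'M[R]_n).

Lemma outer_nilpotent (M : 'M[R]_n) (c : 'rV[R]_n) (k : R) :
  c *m M *m c^T = 0 ->
  (k *: (c^T *m c) *m M) *m (k *: (c^T *m c) *m M) = 0.
Proof.
move=> cMc; rewrite -!scalemxAl -scalemxAr.
suff -> : c^T *m c *m M *m (c^T *m c *m M) = c^T *m (c *m M *m c^T) *m c *m M.
  by rewrite cMc mulmx0 !mul0mx !scaler0.
by rewrite !mulmxA.
Qed.

Lemma invmx_congruent G P D :
  P \in unitmx -> P *m G *m P^T = D -> D *m D = 1%:M ->
  invmx G = P^T *m D *m P.
Proof.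
move=> Pu PGP DD.
have GPt : G *m P^T = invmx P *m D by rewrite -PGP -!mulmxA mulKmx.
have GX : G *m (P^T *m D *m P) = 1%:M.
  by rewrite !mulmxA GPt -(mulmxA _ D D) DD mulmx1 mulVmx.
have [Gu _] := mulmx1_unit GX.
by rewrite -[invmx G]mulmx1 -GX mulKmx.
Qed.

End MatrixFacts.

Lemma outer_self_eq0 (R : idomainType) (n : nat) (c : 'rV[R]_n) :
  (c^T *m c == 0) = (c == 0).
Proof.
apply/eqP/eqP => [cc0|->]; last by rewrite mulmx0.
apply/rowP => i; have /eqP := congr1 (fun M : 'M_n => M i i) cc0.
by rewrite !mxE big_ord1 !mxE mulf_eq0 orbb => /eqP.
Qed.

Section Forms.
Variables (R : realType) (n : nat).
Implicit Types (a b u w x y z : 'rV[R]_n) (G P D M : 'M[R]_n).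

Definition pairing a x : R := \sum_i a 0 i * x 0 i.

Definition totally_isotropic M a b : Prop :=
  [/\ ip M a a = 0, ip M a b = 0, ip M b a = 0 & ip M b b = 0].

Lemma pairingE a x : pairing a x = (a *m x^T) 0 0.
Proof. by rewrite mxE; apply: eq_bigr => i _; rewrite mxE. Qed.

Lemma pairingEr a x : pairing a x = (x *m a^T) 0 0.
Proof. by rewrite mxE; apply: eq_bigr => i _; rewrite mxE mulrC. Qed.

Lemma pairing_delta a i : pairing a 'e_i = a 0 i.
Proof. by rewrite pairingE trmx_delta -colE !mxE. Qed.

Lemma pairing0 x : pairing 0 x = 0.
Proof. by rewrite /pairing big1 // => i _; rewrite mxE mul0r. Qed.

Lemma pairing_congruent P u y :
  P \in unitmx -> pairing (u *m invmx P^T) (y *m P) = pairing u y.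
Proof.
by move=> Pu; rewrite !pairingE trmx_mul -mulmxA mulKmx ?unitmx_tr.
Qed.

Lemma ipDl M x y z : ip M (x + y) z = ip M x z + ip M y z.
Proof. by rewrite /ip !mulmxDl mxE. Qed.

Lemma ipDr M x y z : ip M x (y + z) = ip M x y + ip M x z.
Proof. by rewrite /ip linearD /= mulmxDr mxE. Qed.

Lemma ipZl M k x y : ip M (k *: x) y = k * ip M x y.
Proof. by rewrite /ip -!scalemxAl mxE. Qed.

Lemma ipZr M k x y : ip M x (k *: y) = k * ip M x y.
Proof. by rewrite /ip linearZ /= -scalemxAr mxE. Qed.

Lemma ip_eq0_mx M x y : ip M x y = 0 -> x *m M *m y^T = 0.
Proof.
by move=> xy0; rewrite [LHS]mx11_scalar -[_ 0 0]/(ip M x y) xy0 raddf0.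
Qed.

Lemma ip_sum M x y : ip M x y = \sum_i \sum_j M i j * x 0 i * y 0 j.
Proof.
rewrite /ip mxE exchange_big; apply: eq_bigr => i _.
rewrite mxE big_distrl /=; apply: eq_bigr => j _; rewrite !mxE; ring.
Qed.

Lemma ip_congruent G P D u w :
  P \in unitmx -> invmx G = P^T *m D *m P ->
  ip (invmx G) (u *m invmx P^T) (w *m invmx P^T) = ip D u w.
Proof.
move=> Pu ->; rewrite /ip trmx_mul trmx_inv trmxK !mulmxA.
by rewrite mulmxKV ?unitmx_tr // mulmxK.
Qed.

Lemma ip_diag_delta (d : 'rV[R]_n) i j :
  ip (diag_mx d) 'e_i 'e_j = d 0 i *+ (i == j).
Proof.
rewrite /ip -rowE row_diag_mx trmx_delta -scalemxAl mul_delta_mx_cond !mxE.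
by case: (i == j); rewrite ?mulr0n ?mulr1n !mxE ?mulr0 ?mulr1.
Qed.

Lemma isotropic_comb M a b s t s' t' :
  totally_isotropic M a b -> ip M (s *: a + t *: b) (s' *: a + t' *: b) = 0.
Proof.
case=> aa ab ba bb.
by rewrite !(ipDl, ipDr, ipZl, ipZr) aa ab ba bb !(mulr0, addr0).
Qed.

Lemma hyperbolic_isotropic (d : 'rV[R]_n) i j k l :
  uniq [:: i; j; k; l] -> d 0 j = - d 0 i -> d 0 l = - d 0 k ->
  totally_isotropic (diag_mx d) ('e_i + 'e_j) ('e_k + 'e_l).
Proof.
rewrite /= !inE !negb_or => /and4P[/and3P[ij ik il] /andP[jk jl] kl _].
move=> dj dl; rewrite /totally_isotropic !(ipDl, ipDr) !ip_diag_delta !eqxx.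
rewrite ?(eq_sym j i) ?(eq_sym k i) ?(eq_sym l i) ?(eq_sym k j) ?(eq_sym l j).
rewrite ?(eq_sym l k) (negbTE ij) (negbTE ik) (negbTE il) (negbTE jk).
rewrite (negbTE jl) (negbTE kl) dj dl.
by split; rewrite !(mulr0n, mulr1n, addr0, add0r) ?subrr ?addNr.
Qed.

End Forms.

Section WedgeTensor.
Variables (R : realType) (n : nat).
Implicit Types (a b c x y z w v : 'rV[R]_n) (G M N : 'M[R]_n).

Definition wedge a b : 'M[R]_n := a^T *m b - b^T *m a.

Definition wedge_sq_tensor a b : tensor5 R n :=
  fun i j k l m => wedge a b i j * wedge a b k l * b 0 m.

Definition wedge_contract a b x : 'rV[R]_n :=
  pairing b x *: a - pairing a x *: b.

Lemma ip_wedge a b x y :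
  ip (wedge a b) x y = pairing a x * pairing b y - pairing b x * pairing a y.
Proof.
have ip_outer c d : ip (c^T *m d) x y = pairing c x * pairing d y.
  by rewrite /ip !mulmxA -mulmxA mxE big_ord1 pairingEr pairingE.
rewrite -!ip_outer /wedge /ip mulmxBr mulmxBl !mxE -sumrB.
by apply: eq_bigr => i _; rewrite !mxE.
Qed.

Lemma tev_prod M N c x y z w v :
  tev (fun i j k l m => M i j * N k l * c 0 m) x y z w v
  = ip M x y * ip N z w * pairing c v.
Proof.
rewrite !ip_sum /pairing -mulrA mulr_suml; apply: eq_bigr => i _.
rewrite mulr_suml; apply: eq_bigr => j _.
rewrite mulr_suml mulr_sumr; apply: eq_bigr => k _.
rewrite mulr_suml mulr_sumr; apply: eq_bigr => l _.
rewrite !mulr_sumr; apply: eq_bigr => m _; ring.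
Qed.

Lemma tev_wedge_sq a b x y z w v :
  tev (wedge_sq_tensor a b) x y z w v
  = ip (wedge a b) x y * ip (wedge a b) z w * pairing b v.
Proof. exact: tev_prod. Qed.

Lemma wedge_sq_tensor_cdact a b : is_cdact (wedge_sq_tensor a b).
Proof. by move=> x y z w v; rewrite !tev_wedge_sq !ip_wedge; split; ring. Qed.

Lemma szabo_wedge_sq G a b x :
  szabo G (wedge_sq_tensor a b) x
  = (- pairing b x) *: ((wedge_contract a b x)^T *m wedge_contract a b x)
    *m invmx G.
Proof.
congr (_ *m _); apply/matrixP => i j.
rewrite !mxE tev_wedge_sq !ip_wedge !pairing_delta big_ord1 !mxE; ring.
Qed.

Lemma szabo_wedge_sq_nilpotent G a b v :
  totally_isotropic (invmx G) a b ->
  szabo G (wedge_sq_tensor a b) v *m szabo G (wedge_sq_tensor a b) v = 0.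
Proof.
move=> iso; rewrite szabo_wedge_sq; apply/outer_nilpotent/ip_eq0_mx.
by rewrite /wedge_contract -scaleNr isotropic_comb.
Qed.

Lemma szabo_wedge_sq_neq0 G a b x :
  G \in unitmx -> a != 0 -> pairing a x = 0 -> pairing b x = 1 ->
  szabo G (wedge_sq_tensor a b) x != 0.
Proof.
move=> Gu a_neq0 ax bx; rewrite szabo_wedge_sq /wedge_contract ax bx.
rewrite scale0r subr0 scale1r scaleN1r mulNmx oppr_eq0.
apply: contra a_neq0 => /eqP aaG0.
by rewrite -outer_self_eq0 -[_ *m a](mulmxKV Gu) aaG0 mul0mx.
Qed.

End WedgeTensor.

Section Signature.
Variables (R : realType) (p q : nat).

Definition sylvester : 'M[R]_(p + q) :=
  diag_mx (\row_(i < p + q) (if (i < p)%N then 1 else -1 : R)).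

Lemma has_signatureP G :
  has_signature p q G -> exists2 P, P \in unitmx & P *m G *m P^T = sylvester.
Proof. by case=> P []; exists P. Qed.

Lemma sylvester_sqr : sylvester *m sylvester = 1%:M.
Proof.
apply/matrixP => i j; rewrite mul_diag_mx !mxE.
by case: eqP => _; case: ifP; rewrite ?mulr1n ?mulr0n ?mulr0 ?mulrNN ?mulr1.
Qed.

Lemma signature_isotropic_plane G :
  (2 <= p)%N -> (2 <= q)%N -> has_signature p q G ->
  exists a b x : 'rV[R]_(p + q),
    [/\ totally_isotropic (invmx G) a b, a != 0, pairing a x = 0
      & pairing b x = 1].
Proof.
move=> hp hq /has_signatureP[P Pu PGP].
have Ginv := invmx_congruent Pu PGP sylvester_sqr.
have [lt0 lt1 ltp ltp1] : [/\ 0 < p + q, 1 < p + q, p < p + q & p.+1 < p + q]%N.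
  by split; lia.
pose i0 := Ordinal lt0; pose i1 := Ordinal lt1.
pose j0 := Ordinal ltp; pose j1 := Ordinal ltp1.
pose u : 'rV[R]_(p + q) := 'e_i0 + 'e_j0.
pose w : 'rV[R]_(p + q) := 'e_i1 + 'e_j1.
exists (u *m invmx P^T), (w *m invmx P^T), ('e_i1 *m P).
rewrite !pairing_congruent // !pairing_delta.
split.
- rewrite /totally_isotropic !(ip_congruent _ _ Pu Ginv).
  apply: hyperbolic_isotropic.
  + by rewrite /= !inE -!val_eqE /=; lia.
  + by rewrite !mxE /=; do 2 case: ifP => //; lia.
  + by rewrite !mxE /=; do 2 case: ifP => //; lia.
- apply/eqP => a0; have := pairing_congruent u 'e_i0 Pu.
  rewrite a0 pairing0 pairing_delta !mxE -!val_eqE /= (ltn_eqF (ltnW hp)).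
  by rewrite addr0 => /esym/eqP; rewrite oner_eq0.
- by rewrite !mxE -!val_eqE /= (ltn_eqF hp) add0r.
- by rewrite !mxE -!val_eqE /= eqSS (ltn_eqF (ltnW hp)) addr0.
Qed.

End Signature.

Theorem theorem1p7 (R : realType) (p q : nat) (G : 'M[R]_(p + q)) :
  (2 <= p)%N -> (2 <= q)%N ->
  G^T = G -> G \in unitmx -> has_signature p q G ->
  exists T : tensor5 R (p + q),
    [/\ is_cdact T,
        (forall v : 'rV[R]_(p + q), szabo G T v *m szabo G T v = 0)
      & exists v : 'rV[R]_(p + q), szabo G T v != 0].
Proof.
(* Symmetry of [G] already follows from the signature hypothesis. *)
move=> hp hq _ Gu /(signature_isotropic_plane hp hq).
case=> a [b [x [iso a_neq0 ax bx]]].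
exists (wedge_sq_tensor a b); split.
- exact: wedge_sq_tensor_cdact.
- by move=> v; apply: szabo_wedge_sq_nilpotent.
- by exists x; apply: szabo_wedge_sq_neq0.
Qed.
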